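(* In the setting of the flag $\mathcal{F}=(\mathcal{F}_1,\dots,\mathcal{F}_r)$, $r\ge2$, with $\mathcal{F}_i=\bigoplus_{j=0}^{s_i-1}\mathbb{F}_{q^m}\alpha^{lj}$ and $1\le s_1<\dots<s_r<s=n/m$, assume $L=s$. Then: (1) $\mathcal{F}$ is a generalized Galois flag (so $\mathrm{Orb}(\mathcal{F})$ is a generalized Galois flag code) if and only if $s_1=1$. (2) If $r=2$, $s_1=1$ and $s_2=L-1$, then $\mathrm{Orb}(\mathcal{F})$ is an optimum distance generalized Galois flag code of type $(m,n-m)$ (distance $4m$) with cardinality $\frac{q^n-1}{q^m-1}$, the largest possible for cyclic orbit flag codes with best friend $\mathbb{F}_{q^m}$.
   Context: $q$ prime power; $m$ divides $n$; $\alpha$ is a primitive element of $\mathbb{F}_{q^n}$; $l$ is an integer with $1\le l<\frac{q^n-1}{q^m-1}$; $L$ is the degree of the minimal polynomial of $\alpha^l$ over $\mathbb{F}_{q^m}$. Subspaces are $\mathbb{F}_q$-subspaces of $\mathbb{F}_{q^n}$; a flag is a chain $\{0\}\subsetneq\mathcal{F}_1\subsetneq\cdots\subsetneq\mathcal{F}_r\subsetneq\mathbb{F}_{q^n}$ with type its vector of dimensions. $d_S(\mathcal{U},\mathcal{V})=\dim(\mathcal{U}+\mathcal{V})-\dim(\mathcal{U}\cap\mathcal{V})$, $d_f(\mathcal{F},\mathcal{F}')=\sum_i d_S(\mathcal{F}_i,\mathcal{F}'_i)$, $\mathrm{Orb}(\mathcal{F})=\{\mathcal{F}\alpha^j:j\ge0\}$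 with $\mathcal{F}\alpha^j=(\mathcal{F}_1\alpha^j,\dots)$, and the minimum distance of a code is the minimum $d_f$ between distinct codewords. A flag code of type $(t_1,\dots,t_r)$ is an optimum distance flag code if its minimum distance equals $2(\sum_{t_i\le\lfloor n/2\rfloor}t_i+\sum_{t_i>\lfloor n/2\rfloor}(n-t_i))$. A generalized Galois flag is a flag having at least one subspace that is a subfield of $\mathbb{F}_{q^n}$ and at least one subspace that is not a subfield, such that its subspaces that are subfields form a chain of subfields (a Galois subflag). *)

From HB Require Import structures.
From mathcomp Require Import all_boot all_order all_algebra all_field.
Set Implicit Arguments. Unset Strict Implicit. Unset Printing Implicit Defensive.
Import GRing.Theory.
Local Open Scope ring_scope.

(* Setting: K is the finite field F_q, L is a finite-dimensional field
   extension of K (so L = F_{q^n} with n = \dim {:L}); "subspaces" are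
   K-subspaces of L, i.e. elements of {vspace L}. *)

Section FlagDefs.
Variables (K : finFieldType) (L : fieldExtType K).

Definition is_subfield (U : {vspace L}) : Prop :=
  1 \in U /\ (forall x y, x \in U -> y \in U -> x * y \in U) /\
  (forall x, x \in U -> x^-1 \in U).

Definition vproper (U V : {vspace L}) : bool := (U <= V)%VS && (U != V).

Definition is_flag (F : seq {vspace L}) : Prop :=
  sorted vproper F /\ (forall U, U \in F -> vproper 0%VS U /\ vproper U fullv).

Definition flag_type (F : seq {vspace L}) : seq nat := [seq \dim U | U <- F].

Definition dS (U V : {vspace L}) : nat := (\dim (U + V) - \dim (U :&: V))%N.
Definition df (F G : seq {vspace L}) : nat :=
  (\sum_(p <- zip F G) dS p.1 p.2)%N.

Definition flag_mul (F : seq {vspace L}) (x : L) : seq {vspace L} :=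
  [seq (U * <[x]>)%VS | U <- F].

Definition Orb (alpha : L) (F : seq {vspace L}) : seq {vspace L} -> Prop :=
  fun G => exists j : nat, G = flag_mul F (alpha ^+ j).

Definition code_card (C : seq {vspace L} -> Prop) (N : nat) : Prop :=
  exists s : seq (seq {vspace L}), [/\ uniq s, size s = N & forall G, G \in s <-> C G].

Definition min_dist (C : seq {vspace L} -> Prop) (d : nat) : Prop :=
  (exists F G, [/\ C F, C G, F <> G & df F G = d]) /\
  (forall F G, C F -> C G -> F <> G -> (d <= df F G)%N).

Definition optimum_distance_code (n : nat) (t : seq nat)
    (C : seq {vspace L} -> Prop) : Prop :=
  (forall F, C F -> is_flag F /\ flag_type F = t) /\
  min_dist C (2 * (\sum_(ti <- t) (if (ti <= n./2)%N then ti else n - ti)))%N.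

Definition gen_galois_flag (F : seq {vspace L}) : Prop :=
  is_flag F /\
  (exists2 U, U \in F & is_subfield U) /\
  (exists2 U, U \in F & ~ is_subfield U) /\
  (forall i j, (i < j < size F)%N -> is_subfield (nth 0%VS F i) ->
     is_subfield (nth 0%VS F j) -> (nth 0%VS F i <= nth 0%VS F j)%VS).

Definition best_friend (F : seq {vspace L}) (E : {vspace L}) : Prop :=
  is_subfield E /\ (forall U, U \in F -> (E * U <= U)%VS) /\
  (forall E', is_subfield E' -> (forall U, U \in F -> (E' * U <= U)%VS) ->
     (E' <= E)%VS).

Definition primitive_elt (alpha : L) : Prop :=
  forall x : L, x != 0 -> exists k : nat, x = alpha ^+ k.

Definition Fsub (E : {vspace L}) (alpha : L) (l t : nat) : {vspace L} :=
  (\sum_(j < t) E * <[alpha ^+ (l * j)]>)%VS.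

Definition the_flag (E : {vspace L}) (alpha : L) (l : nat) (ss : seq nat) :=
  [seq Fsub E alpha l si | si <- ss].

End FlagDefs.

(* Put beta = alpha^l, of degree s = n/m over E = F_{q^m}.  The subspaces
   F_t = E + E beta + ... + E beta^(t-1) have dimension m t for t <= s, and a
   subfield containing E and beta contains E(beta) = F_s; so among the F_t
   with t < s only F_1 = E is a subfield, which gives (1).
   For (2) both members E and F_{s-1} of the flag are E-modules, hence fixed
   by every x in E^*, and an orbit has at most (q^n-1)/(q^m-1) elements.
   For x outside E and U in {E, F_{s-1}} we have U x <> U, since otherwise the
   degree of x over E would divide both dim U / m (which is 1 or s - 1) and s.
   As U :&: U x is again an E-module, d_S(U, U x) >= 2m, while the dimensions
   of U force d_S(U, U x) <= 2m.  So distinct flags of the orbit are exactly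
   at distance 4m, the optimum for the type (m, n - m), and the orbit has
   exactly (q^n-1)/(q^m-1) elements. *)

From HB Require Import structures.
From mathcomp Require Import all_boot all_order all_algebra all_field.
From mathcomp Require Import zify.

Set Implicit Arguments.
Unset Strict Implicit.
Unset Printing Implicit Defensive.
Import GRing.Theory.
Local Open Scope ring_scope.

Section SubspaceDistance.
Variables (K : finFieldType) (L : fieldExtType K).
Implicit Types (U V : {vspace L}) (G H : seq {vspace L}) (x y : L).

Lemma vproperE U V : vproper U V = (U <= V)%VS && (\dim U < \dim V)%N.
Proof.
rewrite /vproper; case sUV: (U <= V)%VS => //=.
by rewrite (ltn_leqif (dimv_leqif_eq sUV)).
Qed.

Lemma dS_id U : dS U U = 0%N.
Proof. by rewrite /dS addvv capvv subnn. Qed.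

Lemma dS_le_dim U V : (dS U V <= \dim U + \dim V)%N.
Proof. by rewrite /dS -(dimv_sum_cap U V); lia. Qed.

Lemma dS_eq_dim U V :
  \dim U = \dim V -> dS U V = (2 * (\dim U - \dim (U :&: V)))%N.
Proof. by move=> dUV; have := dimv_sum_cap U V; rewrite /dS -dUV; lia. Qed.

Lemma dS_le_codim U V :
  \dim U = \dim V -> (dS U V <= 2 * (\dim {:L} - \dim U))%N.
Proof.
move=> dUV; have := dimv_sum_cap U V; have := dimvS (subvf (U + V)).
rewrite /dS -dUV; lia.
Qed.

Lemma subv_mulr U V y : y != 0 -> (U * <[y]> <= V * <[y]>)%VS = (U <= V)%VS.
Proof.
move=> y0; apply/idP/idP => [|/prodvSl //].
have cancel W : (W * <[y]> * <[y^-1]>)%VS = W.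
  by rewrite -prodvA prodv_line mulfV // prodv1.
by move/(prodvSl <[y^-1]>%VS); rewrite !cancel.
Qed.

Lemma dS_mulr U V y : y != 0 -> dS (U * <[y]>) (V * <[y]>) = dS U V.
Proof.
move=> y0; have := dimv_sum_cap (U * <[y]>) (V * <[y]>).
rewrite /dS -prodvDl !dim_cosetv // -(dimv_sum_cap U V) => /eqP.
by rewrite eqn_add2l => /eqP ->.
Qed.

Lemma flag_mulM G x y : flag_mul (flag_mul G x) y = flag_mul G (x * y).
Proof.
by rewrite /flag_mul -map_comp; apply: eq_map => U /=; rewrite -prodvA prodv_line.
Qed.

Lemma df_refl G : df G G = 0%N.
Proof. by elim: G => [|U G IH]; rewrite /df ?big_nil //= big_cons dS_id. Qed.

Lemma df_flag_mul G H y : y != 0 -> df (flag_mul G y) (flag_mul H y) = df G H.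
Proof.
move=> y0; elim: G H => [|U G IH] [|V H]; rewrite /df ?big_nil //=.
by rewrite !big_cons dS_mulr // -/(df _ _) IH.
Qed.

Lemma is_flag_mul G y : y != 0 -> is_flag G -> is_flag (flag_mul G y).
Proof.
move=> y0 [sortG bndG]; split.
  rewrite sorted_map; apply: sub_sorted sortG => U V.
  by rewrite /= !vproperE subv_mulr // !dim_cosetv.
move=> _ /mapP[U UG ->]; have [] := bndG U UG.
by rewrite !vproperE !sub0v !subvf !dim_cosetv.
Qed.

Lemma flag_type_mul G y : y != 0 -> flag_type (flag_mul G y) = flag_type G.
Proof.
by move=> y0; rewrite /flag_type -map_comp; apply: eq_map => U /=; rewrite dim_cosetv.
Qed.

End SubspaceDistance.

Section ModulesOverSubfield.
Variables (K : finFieldType) (L : fieldExtType K) (E : {subfield L}).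
Implicit Types (U : {vspace L}) (G : seq {vspace L}) (x : L).

Lemma subfield_is_subfield : is_subfield (E : {vspace L}).
Proof.
by split; [exact: mem1v | split=> [x y Ex Ey | x Ex]]; [rewrite rpredM | rewrite rpredV].
Qed.

Lemma is_subfield_adjoin_sub U x :
  is_subfield U -> (E <= U)%VS -> x \in U -> (<<E; x>> <= U)%VS.
Proof.
case=> U1 [mulU _] sEU xU; rewrite Fadjoin_eq_sum; apply/subv_sumP => i _.
have xiU : x ^+ i \in U by elim: (val i) => [|k IH]; rewrite ?expr0 // exprS mulU.
apply/prodvP => u v /(subvP sEU) uU; rewrite memvE in xiU.
by move/(subvP xiU); apply: mulU.
Qed.

Lemma prodv_line_fixed U x :
  (E * U <= U)%VS -> x \in E -> x != 0 -> (U * <[x]>)%VS = U.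
Proof.
move=> sEU Ex x0; apply/eqP; rewrite eqEdim dim_cosetv // leqnn andbT.
by apply: subv_trans sEU; rewrite prodvC prodvSl // -memvE.
Qed.

Lemma flag_mul_fixed G x :
  {in G, forall U, (E * U <= U)%VS} -> x \in E -> x != 0 -> flag_mul G x = G.
Proof.
move=> sEG Ex x0; rewrite /flag_mul -[RHS]map_id; apply/eq_in_map => U UG.
exact: prodv_line_fixed (sEG U UG) Ex x0.
Qed.

Lemma best_friend_mem G :
  (E : {vspace L}) \in G -> {in G, forall U, (E * U <= U)%VS} -> best_friend G E.
Proof.
move=> EG sEG; split; [exact: subfield_is_subfield | split=> // E' _ sE'G].
apply/subvP => z zE'; rewrite -[z]mulr1.
exact: (subvP (sE'G _ EG)) (memv_mul zE' (mem1v E)).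
Qed.

(* If [U x = U] then [U] is an [E(x)]-module, so the degree of [x] over [E]
   divides both [t] and [s]. *)
Lemma prodv_line_neq U x t s :
  (E * U <= U)%VS -> \dim U = (\dim E * t)%N -> \dim {:L} = (\dim E * s)%N ->
  coprime t s -> x \notin E -> (U * <[x]>)%VS != U.
Proof.
move=> sEU dU dL cots; apply: contra => /eqP Ux.
have sExU : (<<E; x>> * U <= U)%VS.
  have Uxk k : (U * <[x ^+ k]>)%VS = U.
    by elim: k => [|k IH]; rewrite ?expr0 ?prodv1 // exprSr -prodv_line prodvA IH Ux.
  rewrite Fadjoin_eq_sum big_distrl /=; apply/subv_sumP => i _.
  by rewrite prodvAC -{2}(Uxk i) prodvSl.
have m0 : (0 < \dim E)%N := adim_gt0 E.
have dvd_t : (adjoin_degree E x %| t)%N.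
  have := field_module_dimS sExU.
  by rewrite dim_Fadjoin dU [(\dim E * _)%N]mulnC dvdn_pmul2r.
have dvd_s : (adjoin_degree E x %| s)%N.
  have := field_dimS (subvf <<E; x>>).
  by rewrite dim_Fadjoin dL [(\dim E * _)%N]mulnC dvdn_pmul2r.
by rewrite -adjoin_deg_eq1 -dvdn1 -(eqnP cots) dvdn_gcd dvd_t.
Qed.

Lemma dS_prodv_line_ge U x :
  (E * U <= U)%VS -> x != 0 -> (U * <[x]>)%VS != U ->
  (2 * \dim E <= dS U (U * <[x]>))%N.
Proof.
move=> sEU x0 Ux; set C := (U :&: U * <[x]>)%VS.
have sECC : (E * C <= C)%VS.
  rewrite subv_cap (subv_trans (prodvSr _ (capvSl _ _)) sEU) /=.
  by rewrite (subv_trans (prodvSr _ (capvSr _ _))) // prodvA prodvSl.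
have ltCU : (\dim C < \dim U)%N.
  rewrite ltn_neqAle dimvS ?capvSl // andbT; apply: contra Ux => /eqP dC.
  have CU : C = U by apply/eqP; rewrite eqEdim capvSl dC leqnn.
  have sUUx : (U <= U * <[x]>)%VS by rewrite -[X in (X <= _)%VS]CU capvSr.
  by rewrite eq_sym eqEdim sUUx dim_cosetv ?leqnn.
have [c dCc] := dvdnP (field_module_dimS sECC).
have [u dUu] := dvdnP (field_module_dimS sEU).
have ltcu : (c < u)%N by rewrite -(ltn_pmul2r (adim_gt0 E)) -dCc -dUu.
rewrite dS_eq_dim ?dim_cosetv // -/C dCc dUu -mulnBl mulnA leq_mul2r.
by apply/orP; right; lia.
Qed.

End ModulesOverSubfield.

Section FieldSizes.
Variables (K : finFieldType) (L : fieldExtType K).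
Local Notation q := #|K|.

Lemma card_finvect : #|finvect_type L| = (q ^ \dim {:L})%N.
Proof.
rewrite -(card_vspacef (Vector.class (finvect_type L))).
by rewrite (card_vspace (fullv : {vspace finvect_type L})).
Qed.

Lemma expq_gt1 d : (0 < d)%N -> (1 < q ^ d)%N.
Proof. by move=> d0; rewrite -{1}(expn0 q) ltn_exp2l ?finNzRing_gt1. Qed.

Lemma expq_subfield_dvd (E : {subfield L}) :
  (q ^ \dim E - 1 %| q ^ \dim {:L} - 1)%N.
Proof.
have [d ->] := dvdnP (field_dimS (subvf E)).
by rewrite mulnC expnM !subn1 dvdn_pred_predX.
Qed.

End FieldSizes.

Section PrimitiveElement.
Variables (K : finFieldType) (L : fieldExtType K) (alpha : L).
Hypotheses (alpha_prim : primitive_elt alpha) (alpha_neq0 : alpha != 0).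
Local Notation q := #|K|.

Lemma prim_expr_eq1 k : (alpha ^+ k == 1) = (q ^ \dim {:L} - 1 %| k)%N.
Proof.
set Q := (q ^ \dim {:L} - 1)%N.
have Q_gt0 : (0 < Q)%N by rewrite subn_gt0 expq_gt1 ?adim_gt0.
have alphaQ : alpha ^+ Q = 1.
  have qQ : (q ^ \dim {:L} = Q.+1)%N by move: Q_gt0; rewrite /Q; lia.
  have := Fermat's_little_theorem {:L}%AS alpha; rewrite /= memvf qQ exprSr.
  by move=> /esym/eqP alphaQ1; apply: (mulIf alpha_neq0); rewrite mul1r.
apply/eqP/idP => [alphak | /dvdnP[c ->]]; last by rewrite mulnC exprM alphaQ expr1n.
have alphar : alpha ^+ (k %% Q) = 1.
  by move: alphak; rewrite {1}(divn_eq k Q) exprD mulnC exprM alphaQ expr1n mul1r.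
have [r0|r_gt0] := posnP (k %% Q); first exact/eqP.
(* the [Q] nonzero elements are among the [k %% Q] powers of [alpha] *)
suff : (Q <= k %% Q)%N by rewrite leqNgt ltn_pmod.
have cardQ : #|predC1 (0 : finvect_type L)| = Q by rewrite cardC1 card_finvect /Q subn1.
rewrite -[X in (X <= _)%N]cardQ.
pose f (i : 'I_(k %% Q)) : finvect_type L := alpha ^+ i.
apply: (@leq_trans (size (codom f))); last by rewrite size_codom card_ord.
apply: leq_trans (card_size (codom f : seq (finvect_type L))).
apply: subset_leq_card; apply/subsetP => x /= x0.
have [j ->] := alpha_prim x0; apply/codomP; exists (Ordinal (ltn_pmod j r_gt0)).
by rewrite /f /= {1}(divn_eq j (k %% Q)) exprD mulnC exprM alphar expr1n mul1r.
Qed.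

Lemma prim_expr_in (E : {subfield L}) j :
  (alpha ^+ j \in E) = ((q ^ \dim {:L} - 1) %/ (q ^ \dim E - 1) %| j)%N.
Proof.
have qm_gt0 : (0 < q ^ \dim E - 1)%N by rewrite subn_gt0 expq_gt1 ?adim_gt0.
rewrite Fermat's_little_theorem /= -exprM.
have -> : (j * q ^ \dim E = j * (q ^ \dim E - 1) + j)%N.
  by rewrite mulnBr muln1 subnK // leq_pmulr // ltnW // expq_gt1 ?adim_gt0.
rewrite exprD -{2}(mul1r (alpha ^+ j)) (inj_eq (mulIf (expf_neq0 j alpha_neq0))).
by rewrite prim_expr_eq1 -{1}(divnK (expq_subfield_dvd E)) dvdn_pmul2r.
Qed.

End PrimitiveElement.

Section CyclicOrbitCode.
Variables (K : finFieldType) (L : fieldExtType K) (E : {subfield L}) (alpha : L).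
Hypotheses (alpha_prim : primitive_elt alpha) (alpha_neq0 : alpha != 0).
Local Notation N := ((#|K| ^ \dim {:L} - 1) %/ (#|K| ^ \dim E - 1))%N.
Implicit Types (G : seq {vspace L}) (x y z : L).

Lemma orbit_length_gt0 : (0 < N)%N.
Proof.
rewrite divn_gt0 ?subn_gt0 ?expq_gt1 ?adim_gt0 //.
by rewrite dvdn_leq ?expq_subfield_dvd ?subn_gt0 ?expq_gt1 ?adim_gt0.
Qed.

Lemma flag_mul_expr_modn G k :
  {in G, forall U, (E * U <= U)%VS} ->
  flag_mul G (alpha ^+ k) = flag_mul G (alpha ^+ (k %% N)).
Proof.
move=> sEG; rewrite {1}(divn_eq k N) exprD -flag_mulM.
rewrite (flag_mul_fixed sEG) ?expf_neq0 //.
by rewrite (prim_expr_in alpha_prim alpha_neq0) dvdn_mull.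
Qed.

Lemma Orb_code_card_le G N' :
  {in G, forall U, (E * U <= U)%VS} -> code_card (Orb alpha G) N' -> (N' <= N)%N.
Proof.
move=> sEG [s [uniq_s <- mem_s]].
rewrite -(size_iota 0 N) -(size_map (fun j => flag_mul G (alpha ^+ j))).
apply: uniq_leq_size uniq_s _ => H /mem_s [k ->].
rewrite flag_mul_expr_modn //; apply: map_f.
by rewrite mem_iota ltn_pmod ?orbit_length_gt0.
Qed.

Variables (G : seq {vspace L}) (d : nat).
Hypotheses (sEG : {in G, forall U, (E * U <= U)%VS}) (d_gt0 : (0 < d)%N).
Hypothesis df_G_move : forall x, x != 0 -> x \notin E -> df G (flag_mul G x) = d.

Lemma flag_mul_eq y z :
  y != 0 -> z != 0 -> (flag_mul G y = flag_mul G z) <-> (z / y \in E).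
Proof.
move=> y0 z0; rewrite -{1}(divfK y0 z) -flag_mulM.
have zy0 : z / y != 0 by rewrite mulf_neq0 ?invr_neq0.
split=> [eqG | zyE]; last by rewrite (flag_mul_fixed sEG zyE).
apply: contraT => zyNE; have := df_G_move zy0 zyNE.
by rewrite -(df_flag_mul _ _ y0) -eqG df_refl => d0; move: d_gt0; rewrite -d0.
Qed.

Lemma df_flag_mul_neq y z :
  y != 0 -> z != 0 -> flag_mul G y <> flag_mul G z ->
  df (flag_mul G y) (flag_mul G z) = d.
Proof.
move=> y0 z0 neq; have zy0 : z / y != 0 by rewrite mulf_neq0 ?invr_neq0.
have zyNE : z / y \notin E by apply/negP => /(flag_mul_eq y0 z0).
by rewrite -(divfK y0 z) -flag_mulM df_flag_mul // df_G_move.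
Qed.

Lemma Orb_min_dist : alpha \notin E -> min_dist (Orb alpha G) d.
Proof.
move=> alphaNE; have neq : flag_mul G (alpha ^+ 0) <> flag_mul G (alpha ^+ 1).
  move/(flag_mul_eq (expf_neq0 _ alpha_neq0) (expf_neq0 _ alpha_neq0)).
  by rewrite expr0 divr1 expr1 (negPf alphaNE).
split.
  exists (flag_mul G (alpha ^+ 0)), (flag_mul G (alpha ^+ 1)).
  by split; [exists 0%N | exists 1%N | | rewrite df_flag_mul_neq ?expf_neq0].
by move=> _ _ [i ->] [j ->] ne; rewrite df_flag_mul_neq ?expf_neq0.
Qed.

Lemma Orb_code_card : code_card (Orb alpha G) N.
Proof.
exists [seq flag_mul G (alpha ^+ j) | j <- iota 0 N]; split.
- rewrite map_inj_in_uniq ?iota_uniq //.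
  suff inj i j : (i <= j < N)%N ->
      flag_mul G (alpha ^+ i) = flag_mul G (alpha ^+ j) -> i = j.
    move=> i j; rewrite !mem_iota /= => iN jN.
    by case/orP: (leq_total i j) => ij /esym eq; [|symmetry]; apply: inj; rewrite ?ij.
  case/andP=> ij jN; rewrite flag_mul_eq ?expf_neq0 // -expfB_cond; last first.
    by rewrite (negPf alpha_neq0).
  rewrite (prim_expr_in alpha_prim alpha_neq0) => dvd_ji.
  apply/eqP; rewrite eqn_leq ij /= leqNgt -subn_gt0; apply/negP => ji_gt0.
  have := dvdn_leq ji_gt0 dvd_ji.
  by rewrite leqNgt (leq_ltn_trans (leq_subr i j) jN).
- by rewrite size_map size_iota.
move=> H; split=> [/mapP[j _ ->] | [k ->]]; first by exists j.
rewrite flag_mul_expr_modn //; apply: map_f.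
by rewrite mem_iota ltn_pmod ?orbit_length_gt0.
Qed.

End CyclicOrbitCode.

Section SubspaceChain.
Variables (K : finFieldType) (L : fieldExtType K) (E : {subfield L}) (alpha : L).
Variable l : nat.
Local Notation beta := (alpha ^+ l).
Local Notation F := (Fsub E alpha l).

Lemma FsubE t : F t = (\sum_(j < t) E * <[beta ^+ j]>)%VS.
Proof. by apply: eq_bigr => j _; rewrite exprM. Qed.

Lemma Fsub1 : F 1 = E.
Proof. by rewrite FsubE big_ord1 expr0 prodv1. Qed.

Lemma Fsub_mono t1 t2 : (t1 <= t2)%N -> (F t1 <= F t2)%VS.
Proof.
move=> le12; rewrite !FsubE; apply/subv_sumP => j _.
exact: (sumv_sup (widen_ord le12 j)).
Qed.

Lemma Fsub_stable t : (E * F t <= F t)%VS.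
Proof.
rewrite FsubE big_distrr /=; apply/subv_sumP => j _.
by rewrite prodvA prodv_id; apply: (sumv_sup j).
Qed.

Variable s : nat.
Hypotheses (deg_beta : adjoin_degree E beta = s) (s_gt1 : (1 < s)%N).

Lemma beta_notin : beta \notin E.
Proof. by rewrite -adjoin_deg_eq1 deg_beta; case: s s_gt1 => [|[]]. Qed.

Lemma beta_neq0 : beta != 0.
Proof. by apply: contraNneq beta_notin => ->; apply: mem0v. Qed.

Lemma dim_line_beta j : \dim (E * <[beta ^+ j]>) = \dim E.
Proof. by rewrite dim_cosetv // expf_neq0 // beta_neq0. Qed.

Lemma Fsub_adjoin : F s = <<E; beta>>%VS.
Proof. by rewrite FsubE -deg_beta Fadjoin_eq_sum. Qed.

Lemma dim_Fsub_le t : (\dim (F t) <= \dim E * t)%N.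
Proof.
rewrite FsubE; apply: leq_trans (dimv_leq_sum _ _ _) _.
rewrite (eq_bigr (fun _ => \dim E)) => [|j _]; last exact: dim_line_beta.
by rewrite big_const_ord iter_addn_0 mulnC.
Qed.

(* [F s] is the sum of [F t] and [s - t] further lines, and has the full
   dimension [\dim E * s]. *)
Lemma dim_Fsub t : (t <= s)%N -> \dim (F t) = (\dim E * t)%N.
Proof.
move=> ts; apply/eqP; rewrite eqn_leq dim_Fsub_le /=.
pose R := (\sum_(t <= j < s) E * <[beta ^+ j]>)%VS.
have dimR : (\dim R <= \dim E * (s - t))%N.
  apply: leq_trans (dimv_leq_sum _ _ _) _.
  rewrite (eq_bigr (fun _ => \dim E)) => [|j _]; last exact: dim_line_beta.
  by rewrite sum_nat_const_nat mulnC.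
have FsFR : F s = (F t + R)%VS.
  rewrite !FsubE -!(big_mkord xpredT (fun j => E * <[beta ^+ j]>)%VS).
  exact: big_cat_nat (leq0n t) ts.
have := dimv_sum_cap (F t) R; rewrite -FsFR Fsub_adjoin dim_Fadjoin deg_beta.
have : (\dim E * t <= \dim E * s)%N by rewrite leq_mul2l ts orbT.
move: dimR; rewrite mulnBr [(s * _)%N]mulnC.
move: (\dim E * s)%N (\dim E * t)%N (\dim R) => ms mt dR; lia.
Qed.

Lemma Fsub_proper t1 t2 : (t1 < t2 <= s)%N -> vproper (F t1) (F t2).
Proof.
case/andP=> lt12 le2s; have le1s := ltnW (leq_trans lt12 le2s).
by rewrite vproperE Fsub_mono ?(ltnW lt12) //= !dim_Fsub // ltn_pmul2l ?adim_gt0.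
Qed.

Lemma Fsub_not_subfield t : (1 < t < s)%N -> ~ is_subfield (F t).
Proof.
case/andP=> t_gt1 ts subF.
have sEF : (E <= F t)%VS by rewrite -{1}Fsub1 Fsub_mono // ltnW.
have betaF : beta \in F t.
  have : (E * <[beta ^+ 1]> <= F t)%VS.
    by rewrite FsubE; apply: (sumv_sup (Ordinal t_gt1)).
  by move/subvP; apply; rewrite expr1 -{1}[beta]mul1r memv_mul ?mem1v ?memv_line.
have := dimvS (is_subfield_adjoin_sub subF sEF betaF).
by rewrite -Fsub_adjoin !dim_Fsub ?(ltnW ts) // leq_pmul2l ?adim_gt0 // leqNgt ts.
Qed.

Lemma is_flag_Fsub ss :
  sorted ltn ss -> {in ss, forall t, 0 < t < s}%N -> is_flag (the_flag E alpha l ss).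
Proof.
move=> sorted_ss ss_bnd; split.
  rewrite sorted_map; apply: (sub_in_sorted (P := mem ss)) (allss ss) sorted_ss.
  move=> t1 t2 _ /ss_bnd /andP[_ t2s] lt12.
  by apply: Fsub_proper; rewrite [(t1 < t2)%N]lt12 ltnW.
move=> _ /mapP[t /ss_bnd /andP[t_gt0 ts] ->]; rewrite !vproperE sub0v subvf dimv0.
rewrite dim_Fsub ?(ltnW ts) // muln_gt0 adim_gt0 t_gt0; split=> //.
apply: leq_trans (dimvS (subvf <<E; beta>>%VS)).
by rewrite -Fsub_adjoin dim_Fsub // ltn_pmul2l ?adim_gt0.
Qed.

Lemma gen_galois_flag_Fsub ss :
  (1 < size ss)%N -> sorted ltn ss -> {in ss, forall t, 0 < t < s}%N ->
  gen_galois_flag (the_flag E alpha l ss) <-> head 0%N ss = 1%N.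
Proof.
case: ss => [|a [|b r]] // _ sorted_ss ss_bnd; rewrite [head _ _]/=.
have [a_gt0 _] := andP (ss_bnd a (mem_head _ _)).
have isF := is_flag_Fsub sorted_ss ss_bnd.
split=> [[_ [[_ /mapP[t tss ->] subF] _]] | a1].
  have [t_gt0 ts] := andP (ss_bnd t tss).
  have t1 : t = 1%N.
    apply/eqP; rewrite eqn_leq t_gt0 andbT leqNgt; apply/negP => t_gt1.
    by apply: (Fsub_not_subfield (t := t)); rewrite ?t_gt1.
  have : (a <= t)%N.
    move: tss; rewrite inE => /predU1P[-> //| tbr]; apply: ltnW.
    by have /allP := order_path_min ltn_trans sorted_ss; apply.
  by rewrite t1 => a_le1; apply/eqP; rewrite eqn_leq a_le1.
have [ab _] := andP sorted_ss.
have bss : b \in [:: a, b & r] by rewrite !inE eqxx orbT.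
have [_ bs] := andP (ss_bnd b bss).
split=> //; split; [|split].
- by exists (F a); [exact: mem_head | rewrite a1 Fsub1; exact: subfield_is_subfield].
- exists (F b); first exact: map_f.
  by apply: Fsub_not_subfield; rewrite bs andbT -a1.
move=> i j /andP[ij jsz] _ _; rewrite size_map in jsz.
rewrite !(nth_map 0%N) ?(ltn_trans ij) //; apply: Fsub_mono; apply: ltnW.
by apply: (sorted_ltn_nth ltn_trans 0%N sorted_ss); rewrite // inE (ltn_trans ij).
Qed.

End SubspaceChain.

Lemma two_step_distance n m : (0 < m)%N -> (3 * m <= n)%N ->
  (2 * (\sum_(ti <- [:: m; n - m]) (if ti <= n./2 then ti else n - ti)) = 4 * m)%N.
Proof.
move=> m_gt0 le3mn; rewrite !big_cons big_nil.
have -> : (m <= n./2)%N by lia.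
have -> : (n - m <= n./2)%N = false by apply/negbTE; lia.
lia.
Qed.

Section TwoStepFlag.
Variables (K : finFieldType) (L : fieldExtType K) (E : {subfield L}) (alpha : L).
Variables (l s : nat).
Hypotheses (deg_beta : adjoin_degree E (alpha ^+ l) = s) (s_gt2 : (2 < s)%N).
Hypothesis dimL : \dim {:L} = (\dim E * s)%N.
Local Notation F := (the_flag E alpha l [:: 1%N; s.-1]).

Let s_gt1 : (1 < s)%N := ltnW s_gt2.

Lemma alpha_neq0 : alpha != 0.
Proof.
apply: contraNneq (beta_notin deg_beta s_gt1) => ->.
by rewrite expr0n; case: (l == 0%N); rewrite ?mem0v ?mem1v.
Qed.

Lemma alpha_notin : alpha \notin E.
Proof. by apply: contra (beta_notin deg_beta s_gt1); apply: rpredX. Qed.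

Lemma dim_Fsub_pred : \dim (Fsub E alpha l s.-1) = (\dim {:L} - \dim E)%N.
Proof. by rewrite (dim_Fsub deg_beta s_gt1 (leq_pred s)) dimL -subn1 mulnBr muln1. Qed.

Lemma two_step_flagE : F = [:: (E : {vspace L}); Fsub E alpha l s.-1].
Proof. by rewrite /the_flag /= Fsub1. Qed.

Lemma two_step_flag_stable : {in F, forall U, (E * U <= U)%VS}.
Proof.
by rewrite two_step_flagE => U; rewrite !inE => /predU1P[->|/eqP->];
  [rewrite prodv_id | apply: Fsub_stable].
Qed.

Lemma best_friend_two_step : best_friend F E.
Proof.
by apply: best_friend_mem two_step_flag_stable; rewrite two_step_flagE mem_head.
Qed.

Lemma df_two_step_flag x :
  x != 0 -> x \notin E -> df F (flag_mul F x) = (4 * \dim E)%N.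
Proof.
move=> x0 xNE; have s1s : (s.-1 < s)%N by rewrite prednK // ltnW.
set D := Fsub E alpha l s.-1.
have dimD : \dim D = (\dim E * s.-1)%N by apply: dim_Fsub (ltnW s1s).
have dSE : dS E (E * <[x]>) = (2 * \dim E)%N.
  apply/eqP; rewrite eqn_leq; apply/andP; split.
    by rewrite (leq_trans (dS_le_dim _ _)) // dim_cosetv // addnn mul2n.
  apply: dS_prodv_line_ge => //; first by rewrite prodv_id.
  by apply: (prodv_line_neq (t := 1%N)) dimL _ xNE; rewrite ?prodv_id ?muln1 ?coprime1n.
have dSD : dS D (D * <[x]>) = (2 * \dim E)%N.
  apply/eqP; rewrite eqn_leq; apply/andP; split.
    rewrite (leq_trans (dS_le_codim _)) ?dim_cosetv //.
    by rewrite dim_Fsub_pred subKn // dimvS ?subvf.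
  apply: dS_prodv_line_ge => //; first exact: Fsub_stable.
  apply: (prodv_line_neq (Fsub_stable _ _ _ _)) dimD dimL _ xNE.
  by rewrite -{2}(prednK (ltnW s_gt1)) coprimenS.
by rewrite two_step_flagE /df /= !big_cons big_nil /= dSE dSD addn0 -mulnDl.
Qed.

Lemma is_flag_two_step : is_flag F.
Proof.
apply: (is_flag_Fsub deg_beta s_gt1) => [|t]; first by rewrite /= andbT; lia.
by rewrite !inE => /predU1P[->|/eqP->]; lia.
Qed.

Hypothesis alpha_prim : primitive_elt alpha.

Lemma Orb_two_step_min_dist : min_dist (Orb alpha F) (4 * \dim E).
Proof.
apply: (Orb_min_dist alpha_neq0 two_step_flag_stable _ df_two_step_flag).
  by rewrite muln_gt0 adim_gt0.
exact: alpha_notin.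
Qed.

Lemma Orb_two_step_card :
  code_card (Orb alpha F) ((#|K| ^ \dim {:L} - 1) %/ (#|K| ^ \dim E - 1)).
Proof.
apply: (Orb_code_card alpha_prim alpha_neq0 two_step_flag_stable _ df_two_step_flag).
by rewrite muln_gt0 adim_gt0.
Qed.

Lemma Orb_two_step_optimum :
  optimum_distance_code (\dim {:L}) [:: \dim E; (\dim {:L} - \dim E)%N] (Orb alpha F).
Proof.
split=> [_ [j ->] | ]; last first.
  rewrite two_step_distance ?adim_gt0 //; first exact: Orb_two_step_min_dist.
  by rewrite dimL mulnC leq_mul2l s_gt2 orbT.
have aj0 : alpha ^+ j != 0 := expf_neq0 _ alpha_neq0.
split; first exact: is_flag_mul aj0 is_flag_two_step.
by rewrite flag_type_mul // two_step_flagE /flag_type /= dim_Fsub_pred.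
Qed.

End TwoStepFlag.

Lemma mem_sorted_ltn_bounds (ss : seq nat) t :
  sorted ltn ss -> t \in ss -> (head 0 ss <= t <= last 0 ss)%N.
Proof.
move=> /(sub_sorted ltnW) sorted_ss tss.
have [i i_lt ->] : exists2 i, (i < size ss)%N & t = nth 0%N ss i.
  by exists (index t ss); rewrite ?index_mem ?nth_index.
have sz_gt0 : (0 < size ss)%N := leq_ltn_trans (leq0n i) i_lt.
have le_nth := sorted_leq_nth leq_trans leqnn 0%N sorted_ss.
rewrite -nth0 -nth_last !le_nth ?inE ?prednK //=.
by rewrite -ltnS prednK.
Qed.

Theorem mainTheorem7 (K : finFieldType) (L : fieldExtType K)
    (n m : nat) (E : {subfield L}) (alpha : L) (l : nat) (ss : seq nat) :
    \dim {:L} = n -> \dim E = m -> (m %| n)%N ->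
    primitive_elt alpha ->
    (1 <= l)%N -> (l < (#|K| ^ n - 1) %/ (#|K| ^ m - 1))%N ->
    (2 <= size ss)%N -> sorted ltn ss -> (1 <= head 0%N ss)%N ->
    (last 0%N ss < n %/ m)%N ->
    (* L = s : the minimal polynomial of alpha^l over F_{q^m} has degree n/m *)
    (size (minPoly E (alpha ^+ l))).-1 = (n %/ m)%N ->
    (gen_galois_flag (the_flag E alpha l ss) <-> head 0%N ss = 1%N) /\
    (size ss = 2%N -> head 0%N ss = 1%N ->
       last 0%N ss = ((size (minPoly E (alpha ^+ l))).-1).-1 ->
       let F := the_flag E alpha l ss in
       gen_galois_flag F /\
       optimum_distance_code n [:: m; (n - m)%N] (Orb alpha F) /\
       min_dist (Orb alpha F) (4 * m)%N /\
       code_card (Orb alpha F) ((#|K| ^ n - 1) %/ (#|K| ^ m - 1))%N /\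
       best_friend F E /\
       (forall G N, is_flag G -> best_friend G E -> code_card (Orb alpha G) N ->
             (N <= (#|K| ^ n - 1) %/ (#|K| ^ m - 1))%N)).
Proof.
move=> dimL dimE m_dvd_n prim _ _ size_ss sorted_ss head_gt0 last_lt deg_s.
rewrite size_minPoly succnK in deg_s; rewrite size_minPoly succnK deg_s.
set s := (n %/ m)%N in deg_s last_lt *.
have ss_bnd : {in ss, forall t, 0 < t < s}%N.
  move=> t /(mem_sorted_ltn_bounds sorted_ss) /andP[ht tl].
  by rewrite (leq_trans head_gt0 ht) (leq_ltn_trans tl last_lt).
have s_gt1 : (1 < s)%N.
  by have /andP[/leq_ltn_trans] := ss_bnd _ (mem_nth 0%N (ltnW size_ss)); apply.
have galois := gen_galois_flag_Fsub deg_s s_gt1 size_ss sorted_ss ss_bnd.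
split=> // size2 head1 last_s F; split; first exact/galois.
have ss2 : ss = [:: 1%N; s.-1].
  by move: size2 head1 last_s; case: (ss) => [|a [|b []]] //= _ -> ->.
have s_gt2 : (2 < s)%N by move: sorted_ss; rewrite ss2 /= andbT -ltnS prednK // ltnW.
have dimLs : \dim {:L} = (\dim E * s)%N by rewrite dimL dimE mulnC divnK.
rewrite /F ss2 -dimL -dimE.
split; first exact: Orb_two_step_optimum.
split; first exact: Orb_two_step_min_dist.
split; first exact: Orb_two_step_card.
split; first exact: best_friend_two_step.
move=> G N _ [_ [stableG _]].
exact: (Orb_code_card_le (E := E) prim (alpha_neq0 deg_s s_gt2)).
Qed.
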